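(* Let $\bm{\mu}\in X^{\mathcal{L}(\mathcal{T})}$ with $V_{s_0}(\bm{\mu})\neq\theta$, let $\ell\in\mathcal{L}(\mathcal{T})$, and let $s_0,s_1,\dots,s_k=\ell$ be the path from the root to $\ell$. Then $w^{s_0}_\ell(\bm{\mu})>0$ if and only if both: $d_{s_i}(\bm{\mu})>0$ for all $i=0,1,\dots,k$; and $s_{i+1}=c^*(s_i)$ for every $i\in\{0,\dots,k-1\}$ with $L(s_i)=$MAX in case $a_{s_0}(\bm{\mu})=$'win' (respectively with $L(s_i)=$MIN in case $a_{s_0}(\bm{\mu})=$'lose').
   Context: $\mathcal{T}$ is a finite rooted tree with node set $S$, root $s_0$, children $\mathcal{C}(s)$, leaves $\mathcal{L}(\mathcal{T})$, $\mathcal{D}(s)$ the leaves descending from $s$; internal labels $L(s)\in\{\text{MAX},\text{MIN}\}$. $X\subseteq\mathbb{R}$ mean-parameter set of a one-parameter exponential family; $d(x,y)$ KL divergence between members with means $x,y$; threshold $\theta\in X$. $V_s(\bm{\mu})=\mu_s$ at leaves, max/min of children's values at MAX/MIN nodes; $a_s(\bm{\mu})=$'win' iff $V_s(\bm{\mu})\ge\theta$. Recursive weights: $a^*=a_{s_0}(\bm{\mu})$; $P=$MAX, $Q=$MIN if $a^*=$'win', swapped if 'lose'. Leaf $s$: $w^s_s=1$, $d_s=d(\mu_s,\theta)$ if ($a^*=$'win', $\mu_s\ge\theta$) or ($a^*=$'lose', $\mu_s<\theta$), else $0$. $L(s)=P$: $d_s=\max_c d_c$, with a fixed choice $c^*(s)\in\arg\max_{c\in\mathcal{C}(s)}d_c$;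 if $d_s>0$: $w^s_\ell=w^{c^*(s)}_\ell$ for $\ell\in\mathcal{D}(c^*(s))$, $0$ for other $\ell\in\mathcal{D}(s)$. $L(s)=Q$, all $d_c>0$: $d_s=(\sum_c1/d_c)^{-1}$, $w^s_\ell=\frac{w^c_\ell/d_c}{\sum_{c'}1/d_{c'}}$ for $\ell\in\mathcal{D}(c)$. $L(s)=Q$ otherwise: $d_s=0$. Internal $s$ with $d_s=0$: $\bm{w}^s$ fixed arbitrary probability vector on $\mathcal{D}(s)$. *)

From HB Require Import structures.
From mathcomp Require Import all_boot all_order all_algebra.
From mathcomp Require Import all_classical all_reals all_analysis.

Set Implicit Arguments.
Unset Strict Implicit.
Unset Printing Implicit Defensive.

Import Order.TTheory GRing.Theory Num.Theory.
Import numFieldNormedType.Exports.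
Local Open Scope ring_scope.
Local Open Scope classical_set_scope.

(* One-parameter exponential family (natural parametrisation).          *)
(* Densities exp(eta * x - b eta) w.r.t. a base measure; b is the       *)
(* log-partition function on the open natural-parameter interval Theta, *)
(* differentiable with strictly increasing derivative (non-degenerate   *)
(* family).  The mean of the member with natural parameter eta is       *)
(* b'(eta); the mean-parameter set is X = b' @` Theta.                  *)
Record expfam (R : realType) := ExpFam {
  ef_Theta : set R;
  ef_b : R -> R;
  ef_Theta_open : open ef_Theta;
  ef_Theta_itv : is_interval ef_Theta;
  ef_Theta_n0 : ef_Theta !=set0;
  ef_b_der : forall e, ef_Theta e -> derivable ef_b e 1;
  ef_b'_incr : forall e1 e2, ef_Theta e1 -> ef_Theta e2 -> e1 < e2 ->
      ef_b^`() e1 < ef_b^`() e2 }.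

Section ExpFam.
Variables (R : realType) (F : expfam R).

Definition ef_X : set R := (ef_b F)^`() @` ef_Theta F.

(* natural parameter of the member with mean x (unique, for x in X) *)
Definition ef_eta (x : R) : R :=
  xget 0 [set e | ef_Theta F e /\ (ef_b F)^`() e = x].

(* KL divergence d(x,y) = KL(P_x || P_y) between the members with means
   x and y: b(eta y) - b(eta x) - x (eta y - eta x). *)
Definition ef_kl (x y : R) : R :=
  ef_b F (ef_eta y) - ef_b F (ef_eta x) - x * (ef_eta y - ef_eta x).
End ExpFam.

(* Finite rooted game trees.  Internal nodes carry a label:             *)
(* true = MAX, false = MIN.  A node is identified by its path from the  *)
(* root (the sequence of child indices).                               *)
Inductive tree := Leaf | Node of bool & seq tree.

Fixpoint wf_tree (t : tree) : bool :=
  match t with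
  | Leaf => true
  | Node _ cs => (size cs != 0%N) && all wf_tree cs
  end.

Fixpoint subtree (t : tree) (p : seq nat) : option tree :=
  match p with
  | [::] => Some t
  | i :: p' =>
    match t with
    | Leaf => None
    | Node _ cs => if (i < size cs)%N then subtree (nth Leaf cs i) p' else None
    end
  end.

Definition is_leaf (t : tree) (p : seq nat) : bool :=
  if subtree t p is Some Leaf then true else false.

Definition label (t : tree) (p : seq nat) : option bool :=
  if subtree t p is Some (Node b _) then Some b else None.

Fixpoint tfold (A : Type) (fl : seq nat -> A)
    (fn : seq nat -> bool -> seq A -> A) (t : tree) (p : seq nat) : A :=
  match t with
  | Leaf => fl p
  | Node b cs =>
    fn p b ((fix go (cs : seq tree) (i : nat) : seq A :=
              match cs with
              | [::] => [::]
              | c :: cs' => tfold fl fn c (rcons p i) :: go cs' i.+1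
              end) cs 0%N)
  end.

Definition leaves (t : tree) (p : seq nat) : seq (seq nat) :=
  tfold (fun q => [:: q]) (fun _ _ ls => flatten ls) t p.

Section Game.
Variable R : realType.

Definition seqmax (s : seq R) : R := foldr Num.max (head 0 s) s.
Definition seqmin (s : seq R) : R := foldr Num.min (head 0 s) s.

Definition value (mu : seq nat -> R) (t : tree) (p : seq nat) : R :=
  tfold mu (fun _ b vs => if b then seqmax vs else seqmin vs) t p.

Variables (d : R -> R -> R) (theta : R) (mu : seq nat -> R) (T : tree).

(* a* = 'win' iff V_{s0}(mu) >= theta; the label P is MAX (true) iff win *)
Definition win : bool := theta <= value mu T [::].

(* the pair (d_s, w^s) computed recursively, with a fixed choice
   cstar (indexing the chosen child of a P-node at path p) and fixed
   arbitrary vectors wdef p (used when d_s = 0) *)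
Definition dw (cstar : seq nat -> nat) (wdef : seq nat -> seq nat -> R)
    (t : tree) (p : seq nat) : R * (seq nat -> R) :=
  tfold
    (fun q => (if (win && (theta <= mu q)) || (~~ win && (mu q < theta))
               then d (mu q) theta else 0, fun _ => 1))
    (fun q b cs =>
       let ds := map fst cs in
       let ws := map snd cs in
       let i l := nth 0%N l (size q) in
       if b == win then
         let ds0 := seqmax ds in
         if 0 < ds0 then
           (ds0, fun l => if i l == cstar q then nth (fun _ => 0) ws (i l) l
                          else 0)
         else (ds0, wdef q)
       else
         if all (fun x => 0 < x) ds then
           let h := \sum_(x <- ds) x^-1 in
           (h^-1, fun l => (nth (fun _ => 0) ws (i l) l / nth 0 ds (i l)) / h)
         else (0, wdef q))
    t p.

Definition dnode cstar wdef (q : seq nat) : R :=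
  if subtree T q is Some s then (dw cstar wdef s q).1 else 0.
Definition wnode cstar wdef (q : seq nat) : seq nat -> R :=
  if subtree T q is Some s then (dw cstar wdef s q).2 else (fun _ => 0).

End Game.

From Pilot Require Import Defs.
From HB Require Import structures.
From mathcomp Require Import all_boot all_order all_algebra.
From mathcomp Require Import all_classical all_reals all_analysis.
From mathcomp Require Import ring.

Set Implicit Arguments.
Unset Strict Implicit.
Unset Printing Implicit Defensive.

Import Order.TTheory GRing.Theory Num.Theory.
Local Open Scope ring_scope.

(* At a node s with d_s > 0 the recursion passes positive weight only to c*(s) if
   s is a P-node, where d_(c*(s)) = d_s > 0 because c*(s) is an argmax, and to every
   child, rescaled by positive factors, if s is a Q-node, where d_s > 0 forces d_c > 0
   for all children c.  Hence, below a node with positive d, a leaf gets positive weight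
   exactly when the path to it keeps d positive and follows c* at P-nodes.
   It remains to see d_(s0) > 0.  Call a value decisive if it lies strictly on the side
   of theta given by a*; V_(s0) is decisive since V_(s0) <> theta.  A decisive P-node has
   a decisive child and a decisive Q-node has only decisive children, and a decisive
   leaf has d = d(mu, theta) > 0 since the KL divergence between distinct members of
   the family is positive; by induction every decisive node has d > 0. *)

Section ExpFamKL.
Variables (R : realType) (F : expfam R).
Local Notation b := (ef_b F).
Local Notation b' := (ef_b F)^`()%classic.

Lemma ef_etaP x : ef_X F x -> ef_Theta F (ef_eta F x) /\ b' (ef_eta F x) = x.
Proof.
by case=> e Te <-; rewrite /ef_eta; set P := (X in xget _ X); exact: (@xgetI _ 0 P e).
Qed.

Lemma ef_b_MVT e1 e2 : ef_Theta F e1 -> ef_Theta F e2 -> e1 < e2 ->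
  exists2 z, e1 < z < e2 & b e2 - b e1 = b' z * (e2 - e1).
Proof.
move=> T1 T2 e12.
have Tseg z : e1 <= z <= e2 -> ef_Theta F z by apply: ef_Theta_itv.
have [||z] := @MVT R b b' e1 e2 e12.
- move=> z; rewrite in_itv /= => /andP[z1 z2].
  by rewrite derive1E; apply/derivableP/ef_b_der/Tseg; rewrite !ltW.
- apply: derivable_within_continuous => z; rewrite in_itv /= => z12.
  exact/ef_b_der/Tseg.
- by rewrite in_itv /= => z12 ->; exists z.
Qed.

(* d(x, y) is the Bregman divergence of the strictly convex b between eta x and eta y;
   the MVT makes its sign visible. *)
Lemma ef_kl_gt0 x y : ef_X F x -> ef_X F y -> x != y -> 0 < ef_kl F x y.
Proof.
move=> /ef_etaP[Tx bx] /ef_etaP[Ty byy] xy; rewrite /ef_kl.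
set ex := ef_eta F x in Tx bx *; set ey := ef_eta F y in Ty byy *.
have [lt|lt|eq] := ltgtP ex ey; last by move: xy; rewrite -bx -byy eq eqxx.
- have [z /andP[xz zy] ->] := ef_b_MVT Tx Ty lt.
  rewrite -mulrBl mulr_gt0 ?subr_gt0 // -bx; apply: ef_b'_incr => //.
  by apply: (ef_Theta_itv Tx Ty); rewrite !ltW.
- have [z /andP[yz zx] bE] := ef_b_MVT Ty Tx lt.
  have -> : b ey - b ex - x * (ey - ex) = (x - b' z) * (ex - ey).
    by rewrite mulrBl -bE; ring.
  rewrite mulr_gt0 ?subr_gt0 // -bx; apply: ef_b'_incr => //.
  by apply: (ef_Theta_itv Ty Tx); rewrite !ltW.
Qed.

End ExpFamKL.

Section TreeFold.
Variables (A : Type) (fl : seq nat -> A) (fn : seq nat -> bool -> seq A -> A).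
Variable p : seq nat.

(* A named copy of the children loop inside [tfold], so that [tfold_Node] holds by
   conversion. *)
Fixpoint tfold_children (cs : seq tree) (i : nat) : seq A :=
  if cs is c :: cs' then tfold fl fn c (rcons p i) :: tfold_children cs' i.+1
  else [::].

Lemma tfold_childrenE cs i : tfold_children cs i =
  mkseq (fun k => tfold fl fn (nth Leaf cs k) (rcons p (i + k)%N)) (size cs).
Proof.
elim: cs i => [|c cs IH] i //=; rewrite IH /mkseq /= (iotaDl 1 0) -map_comp.
by congr (_ :: _); [rewrite addn0 | apply: eq_map => k /=; rewrite addSnnS].
Qed.

Lemma tfold_Node b cs : tfold fl fn (Node b cs) p =
  fn p b (mkseq (fun k => tfold fl fn (nth Leaf cs k) (rcons p k)) (size cs)).
Proof. by rewrite [LHS]/= -/(tfold_children cs 0) tfold_childrenE. Qed.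

End TreeFold.

Lemma subtree_cat T p r : subtree T (p ++ r) = obind (subtree^~ r) (subtree T p).
Proof. by elim: p T => [|i p IH] [|b cs] //=; case: ifP. Qed.

Lemma subtree_rcons T p b cs k : subtree T p = Some (Node b cs) ->
  subtree T (rcons p k) = if (k < size cs)%N then Some (nth Leaf cs k) else None.
Proof. by move=> Tp; rewrite -cats1 subtree_cat Tp /=; case: ifP. Qed.

Lemma value_Node (R : realType) (mu : seq nat -> R) b cs p :
  value mu (Node b cs) p =
  let vs := mkseq (fun k => value mu (nth Leaf cs k) (rcons p k)) (size cs) in
  if b then seqmax vs else seqmin vs.
Proof. by rewrite /value tfold_Node; case: b. Qed.

Fixpoint tree_nth_ind (P : tree -> Prop) (PL : P Leaf)
    (PN : forall b cs, (forall k, P (nth Leaf cs k)) -> P (Node b cs)) t : P t :=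
  if t is Node b cs then
    PN b cs ((fix nth_ind cs k : P (nth Leaf cs k) :=
      match cs, k return P (nth Leaf cs k) with
      | [::], 0 | [::], _.+1 => PL
      | c :: _, 0 => tree_nth_ind PL PN c
      | _ :: cs', k'.+1 => nth_ind cs' k'
      end) cs)
  else PL.

Section SeqExtrema.
Variable R : realType.
Implicit Types (s : seq R) (x h : R).

Lemma foldr_max_ub h s x : x \in s -> x <= foldr Num.max h s.
Proof.
by elim: s => //= y s IH; rewrite inE le_max => /predU1P[->|/IH->]; rewrite ?lexx ?orbT.
Qed.

Lemma foldr_min_lb h s x : x \in s -> foldr Num.min h s <= x.
Proof.
by elim: s => //= y s IH; rewrite inE ge_min => /predU1P[->|/IH->]; rewrite ?lexx ?orbT.
Qed.

Lemma foldr_max_mem h s : foldr Num.max h s \in h :: s.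
Proof.
elim: s => [|y s IH] /=; first exact: mem_head.
rewrite maxEle; case: ifP => _; rewrite !inE ?eqxx ?orbT //.
by move: IH; rewrite inE => /orP[]->; rewrite ?orbT.
Qed.

Lemma foldr_min_mem h s : foldr Num.min h s \in h :: s.
Proof.
elim: s => [|y s IH] /=; first exact: mem_head.
rewrite minEle; case: ifP => _; rewrite !inE ?eqxx ?orbT //.
by move: IH; rewrite inE => /orP[]->; rewrite ?orbT.
Qed.

Lemma seqmax_ub s x : x \in s -> x <= seqmax s.
Proof. exact: foldr_max_ub. Qed.

Lemma seqmin_lb s x : x \in s -> seqmin s <= x.
Proof. exact: foldr_min_lb. Qed.

Lemma seqmax_mem s : s != [::] -> seqmax s \in s.
Proof.
by case: s => // x s _; have := foldr_max_mem x (x :: s); rewrite inE orbA orbb -inE.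
Qed.

Lemma seqmin_mem s : s != [::] -> seqmin s \in s.
Proof.
by case: s => // x s _; have := foldr_min_mem x (x :: s); rewrite inE orbA orbb -inE.
Qed.

End SeqExtrema.

Lemma sum_inv_gt0 (R : numFieldType) (s : seq R) :
  s != [::] -> all (fun x => 0 < x) s -> 0 < \sum_(x <- s) x^-1.
Proof.
case: s => // x s _ /andP[x_gt0 s_gt0]; rewrite big_cons.
apply: ltr_pwDl; first by rewrite invr_gt0.
by rewrite big_seq; apply: sumr_ge0 => y ys; rewrite invr_ge0 ltW // (allP s_gt0).
Qed.

Section WeightRecursion.
Variables (R : realType) (d : R -> R -> R) (theta : R) (mu : seq nat -> R) (T : tree).
Variables (cstar : seq nat -> nat) (wdef : seq nat -> seq nat -> R).
Local Notation W := (win theta mu T).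
Local Notation dw := (dw d theta mu T cstar wdef).
Local Notation dn := (dnode d theta mu T cstar wdef).
Local Notation wn := (wnode d theta mu T cstar wdef).
Local Notation dkids p n := (mkseq (fun k => dn (rcons p k)) n).
Local Notation kids p cs := (mkseq (fun k => dw (nth Leaf cs k) (rcons p k)) (size cs)).

Lemma dnode_Leaf p : subtree T p = Some Leaf ->
  dn p = if (W && (theta <= mu p)) || (~~ W && (mu p < theta)) then d (mu p) theta
         else 0.
Proof. by rewrite /dnode => ->. Qed.

Section Children.
Variables (p : seq nat) (b : bool) (cs : seq tree).
Hypothesis Tp : subtree T p = Some (Node b cs).

Lemma map_fst_kids : map fst (kids p cs) = dkids p (size cs).
Proof.
rewrite -map_comp; apply/eq_in_map => k; rewrite mem_iota add0n => /= ks.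
by rewrite /dnode (subtree_rcons _ Tp) ks.
Qed.

(* Out of range both sides are the junk value 0 (resp. the zero vector), so no bound
   on j is needed. *)
Lemma nth_dkids j : nth 0 (dkids p (size cs)) j = dn (rcons p j).
Proof.
have [js|jsN] := ltnP j (size cs); first by rewrite nth_mkseq.
by rewrite nth_default ?size_mkseq // /dnode (subtree_rcons _ Tp) ltnNge jsN.
Qed.

Lemma nth_snd_kids j : nth (fun _ => 0) (map snd (kids p cs)) j = wn (rcons p j).
Proof.
rewrite /wnode (subtree_rcons _ Tp); have [js|jsN] := ltnP j (size cs).
  by rewrite (nth_map (0, fun _ => 0)) ?size_mkseq // nth_mkseq.
by rewrite nth_default // !size_map size_iota.
Qed.

Lemma dnode_Node : dn p =
  let ds := dkids p (size cs) in
  if b == W then seqmax ds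
  else if all (fun x => 0 < x) ds then (\sum_(x <- ds) x^-1)^-1 else 0.
Proof.
have -> : dn p = (dw (Node b cs) p).1 by rewrite /dnode Tp.
by rewrite /Defs.dw tfold_Node /= map_fst_kids; case: (b == W); case: ifP.
Qed.

Lemma wnode_Node l : wn p l =
  let ds := dkids p (size cs) in
  let j := nth 0%N l (size p) in
  if b == W then
    if 0 < seqmax ds then (if j == cstar p then wn (rcons p j) l else 0) else wdef p l
  else if all (fun x => 0 < x) ds then
    wn (rcons p j) l / dn (rcons p j) / \sum_(x <- ds) x^-1
  else wdef p l.
Proof.
have -> : wn p = (dw (Node b cs) p).2 by rewrite /wnode Tp.
rewrite /Defs.dw tfold_Node /= map_fst_kids.
by case: (b == W); case: ifP => //= _; rewrite nth_snd_kids ?nth_dkids.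
Qed.

End Children.

Lemma dnode_gt0_all p b cs : subtree T p = Some (Node b cs) -> b != W ->
  0 < dn p -> all (fun x => 0 < x) (dkids p (size cs)).
Proof.
by move=> Tp /negPf bNW; rewrite (dnode_Node Tp) bNW /=; case: ifP; rewrite ?ltxx.
Qed.

Hypothesis cstar_argmax : forall q b cs, subtree T q = Some (Node b cs) -> b = W ->
  (cstar q < size cs)%N /\
  (forall j, (j < size cs)%N -> dn (rcons q j) <= dn (rcons q (cstar q))).

Lemma dnode_cstar p cs : subtree T p = Some (Node W cs) -> dn p = dn (rcons p (cstar p)).
Proof.
move=> Tp; have [cs_gt cmax] := cstar_argmax Tp erefl.
rewrite (dnode_Node Tp) eqxx /=; apply/eqP; rewrite eq_le; apply/andP; split.
  have /mapP[k] : seqmax (dkids p (size cs)) \in dkids p (size cs).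
    by apply: seqmax_mem; rewrite -size_eq0 size_mkseq -lt0n (leq_ltn_trans _ cs_gt).
  by rewrite mem_iota add0n => /= ks ->; apply: cmax.
by apply/seqmax_ub/map_f; rewrite mem_iota.
Qed.

Lemma wnode_gt0_step p b cs l : subtree T p = Some (Node b cs) -> 0 < dn p ->
  let j := nth 0%N l (size p) in
  0 < wn p l <-> [/\ b = W -> cstar p = j, 0 < dn (rcons p j) & 0 < wn (rcons p j) l].
Proof.
move=> Tp dp j; rewrite (wnode_Node Tp l) /= -/j.
have [bW|bNW] := eqVneq b W.
  subst b; have -> : seqmax (dkids p (size cs)) = dn p by rewrite (dnode_Node Tp) eqxx.
  rewrite dp; case: eqP => [jc|jNc]; last by rewrite ltxx; split=> // -[/(_ erefl)/esym].
  have dj : 0 < dn (rcons p j) by rewrite jc -(dnode_cstar Tp).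
  by split=> [|[]//]; split.
have dall := dnode_gt0_all Tp bNW dp; rewrite dall.
have sum_gt0 : 0 < \sum_(x <- dkids p (size cs)) x^-1.
  by move: dp; rewrite (dnode_Node Tp) /= (negPf bNW) dall invr_gt0.
have [js|jsN] := ltnP j (size cs).
  have dj : 0 < dn (rcons p j).
    by rewrite -(nth_dkids Tp); apply/(all_nthP 0) => //; rewrite size_mkseq.
  by rewrite !pmulr_lgt0 ?invr_gt0 //; split=> [w|[]//]; split=> // bW; rewrite bW eqxx in bNW.
rewrite /wnode /dnode (subtree_rcons _ Tp) ltnNge jsN /= !mul0r ltxx.
by split => // -[].
Qed.

Definition selected_path p r :=
  (forall i, (i <= size r)%N -> 0 < dn (p ++ take i r)) /\
  (forall i, (i < size r)%N -> label T (p ++ take i r) = Some W ->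
     cstar (p ++ take i r) = nth 0%N r i).

Lemma selected_path_cons p b cs j r : subtree T p = Some (Node b cs) ->
  selected_path p (j :: r) <->
  [/\ 0 < dn p, b = W -> cstar p = j & selected_path (rcons p j) r].
Proof.
move=> Tp; have lab : label T p = Some b by rewrite /label Tp.
split=> [[dpath cpath]|[dp cp [dpath cpath]]].
  split; first by have := dpath 0%N isT; rewrite cats0.
    by move=> bW; have := cpath 0%N isT; rewrite cats0 lab bW; apply.
  by split=> i ri; rewrite cat_rcons; [apply: (dpath i.+1) | apply: (cpath i.+1)].
split=> -[|i] /= ri; rewrite ?cats0 -?cat_rcons //.
- exact: dpath.
- by rewrite lab => -[/cp].
- exact: cpath.
Qed.

Lemma wnode_gt0_path r p : subtree T (p ++ r) = Some Leaf -> 0 < dn p ->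
  0 < wn p (p ++ r) <-> selected_path p r.
Proof.
elim: r p => [|j r IH] p.
  rewrite cats0 => Tp dp; rewrite /wnode Tp ltr01.
  by split=> // _; split=> // -[|//]; rewrite cats0.
rewrite -cat_rcons => Tl dp.
have [b [cs Tp]] : exists b cs, subtree T p = Some (Node b cs).
  move: Tl; rewrite cat_rcons subtree_cat.
  by case: (subtree T p) => [[|b cs]|] //; exists b, cs.
have lj : nth 0%N (rcons p j ++ r) (size p) = j by rewrite cat_rcons nth_cat ltnn subnn.
rewrite (wnode_gt0_step _ Tp dp) /= lj (selected_path_cons _ _ Tp).
split=> [[cp dj /(IH _ Tl dj)]|[_ cp sel]] //.
have dj : 0 < dn (rcons p j) by have := sel.1 0%N isT; rewrite take0 cats0.
by split=> //; apply/(IH _ Tl dj).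
Qed.

Definition decisive v := if W then theta < v else v < theta.

Lemma decisive_has b vs : b = W -> vs != [::] ->
  decisive (if b then seqmax vs else seqmin vs) -> has decisive vs.
Proof.
move=> -> vs0 dv; apply/hasP.
by move: dv; rewrite /decisive; case: W => dv; [exists (seqmax vs) | exists (seqmin vs)];
  rewrite ?seqmax_mem ?seqmin_mem.
Qed.

Lemma decisive_all b vs : b != W ->
  decisive (if b then seqmax vs else seqmin vs) -> all decisive vs.
Proof.
move=> bNW dv; apply/allP => v vs_v; move: bNW dv; rewrite /decisive.
case: W; case: b => //= _ dv.
- exact: lt_le_trans dv (seqmin_lb vs_v).
- exact: le_lt_trans (seqmax_ub vs_v) dv.
Qed.

Hypothesis d_leaf_gt0 : forall q, is_leaf T q -> mu q != theta -> 0 < d (mu q) theta.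

Lemma dnode_gt0 t p : subtree T p = Some t -> wf_tree t -> decisive (value mu t p) -> 0 < dn p.
Proof.
elim/tree_nth_ind: t p => [|b cs IH] p Tp.
  have lp : is_leaf T p by rewrite /is_leaf Tp.
  rewrite (dnode_Leaf Tp) /decisive /value /=; case: W => /= _ dp.
    by rewrite (ltW dp) d_leaf_gt0 // gt_eqF.
  by rewrite dp d_leaf_gt0 // lt_eqF.
move=> /= /andP[cs0 /(all_nthP Leaf) wf_cs]; rewrite value_Node /=.
set vs := mkseq _ _; rewrite (dnode_Node Tp) /= => dv.
have vs0 : vs != [::] by rewrite -size_eq0 size_mkseq.
have dkid k : k \in iota 0 (size cs) -> decisive (value mu (nth Leaf cs k) (rcons p k)) ->
    0 < dn (rcons p k).
  rewrite mem_iota leq0n add0n => /= ks.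
  by apply: IH; [rewrite (subtree_rcons _ Tp) ks | apply: wf_cs].
case: eqP => [bW|/eqP bNW].
  have /hasP[_ /mapP[k ks ->] /(dkid k ks) dk] := decisive_has bW vs0 dv.
  by apply: (lt_le_trans dk); apply/seqmax_ub/map_f.
have dall : all (fun x => 0 < x) (dkids p (size cs)).
  apply/allP => _ /mapP[k ks ->]; apply: (dkid k ks).
  by apply: (allP (decisive_all bNW dv)); apply: map_f.
by rewrite dall invr_gt0 sum_inv_gt0 // -size_eq0 size_mkseq.
Qed.

End WeightRecursion.

Theorem proposition9 (R : realType) (F : expfam R) (theta : R)
  (T : tree) (mu : seq nat -> R)
  (cstar : seq nat -> nat) (wdef : seq nat -> seq nat -> R)
  (l : seq nat) :
  wf_tree T ->
  ef_X F theta ->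
  (forall q, is_leaf T q -> ef_X F (mu q)) ->
  (* c*(s) is a fixed element of argmax_{c in C(s)} d_c, for P-nodes s *)
  (forall q b cs, subtree T q = Some (Node b cs) ->
     b = win theta mu T ->
     (cstar q < size cs)%N /\
     (forall j, (j < size cs)%N ->
        dnode (ef_kl F) theta mu T cstar wdef (rcons q j)
        <= dnode (ef_kl F) theta mu T cstar wdef (rcons q (cstar q)))) ->
  (* wdef q is a fixed probability vector on D(s), s the node at q *)
  (forall q b cs, subtree T q = Some (Node b cs) ->
     (forall m, m \in leaves (Node b cs) q -> 0 <= wdef q m) /\
     \sum_(m <- leaves (Node b cs) q) wdef q m = 1) ->
  value mu T [::] != theta ->
  is_leaf T l ->
  (0 < wnode (ef_kl F) theta mu T cstar wdef [::] l <->
   (forall i, (i <= size l)%N ->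
      0 < dnode (ef_kl F) theta mu T cstar wdef (take i l)) /\
   (forall i, (i < size l)%N ->
      label T (take i l) = Some (win theta mu T) ->
      cstar (take i l) = nth 0%N l i)).
Proof.
move=> wfT thetaX muX cstar_argmax _ V_neq leaf_l.
have d_leaf_gt0 q : is_leaf T q -> mu q != theta -> 0 < ef_kl F (mu q) theta.
  by move=> leaf_q; apply: ef_kl_gt0 (muX q leaf_q) thetaX.
have d_root : 0 < dnode (ef_kl F) theta mu T cstar wdef [::].
  apply: (dnode_gt0 cstar wdef d_leaf_gt0 (t := T)) => //.
  by rewrite /decisive /win; case: (leP theta) => // V_ge; rewrite lt_neqAle eq_sym V_neq V_ge.
have T_l : subtree T ([::] ++ l) = Some Leaf.
  by move: leaf_l; rewrite /is_leaf; case: (subtree T l) => [[]|].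
exact: (wnode_gt0_path cstar_argmax T_l d_root).
Qed.
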